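(* Let $\mathcal{Y}$ and $\mathcal{O}$ be finite sets, $\varphi\colon\mathcal{Y}\to\mathbb{R}^p$, $\psi\colon\mathcal{O}\to\mathbb{R}^p$, and let $L\colon\mathcal{O}\times\mathcal{Y}\to\mathbb{R}_+$ satisfy $L(\hat y,y)=\langle\psi(\hat y),V\varphi(y)+b\rangle+c(y)$ with $V\in\mathbb{R}^{p\times p}$, $b\in\mathbb{R}^p$, $c\colon\mathcal{Y}\to\mathbb{R}$. Let $\Omega\colon\mathbb{R}^p\to\mathbb{R}\cup\{\infty\}$ be proper, convex and lower semicontinuous with $\varphi(\mathcal{Y})\subseteq\operatorname{dom}(\Omega)$, and let the surrogate be $S(\theta,y)=S_\Omega(\theta,\varphi(y))$. Then for any decoder $d\colon\mathbb{R}^p\to\mathcal{O}$ and any $\epsilon\ge0$, the calibration function $$\zeta(\epsilon)=\inf_{\theta\in\mathbb{R}^p,\ q\in\triangle^{|\mathcal{Y}|}}\delta s(\theta,q)\quad\text{s.t.}\quad\delta\ell(d(\theta),q)\ge\epsilon$$ equals $$\zeta(\epsilon)=\inf_{\theta\in\mathbb{R}^p,\ \mu\in\mathcal{M}}S_\Omega(\theta,\mu)\quad\text{s.t.}\quad\langle\psi(d(\theta))-\psi(\hat y_L(\mu)),V\mu+b\rangle\ge\epsilon.$$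
   Context: $\triangle^{n}=\{q\in\mathbb{R}^n_+:\|q\|_1=1\}$. $S_\Omega(\theta,\mu)=\Omega^*(\theta)+\Omega(\mu)-\langle\theta,\mu\rangle$ where $\Omega^*$ is the Fenchel conjugate. $\mathcal{M}=\operatorname{conv}(\varphi(\mathcal{Y}))$, and for $q\in\triangle^{|\mathcal{Y}|}$, $\mu_\varphi(q)=\mathbb{E}_{Y\sim q}[\varphi(Y)]$. Pointwise risks: $\ell(\hat y,q)=\mathbb{E}_{Y\sim q}L(\hat y,Y)$, $s(\theta,q)=\mathbb{E}_{Y\sim q}S(\theta,Y)$; excess pointwise risks $\delta\ell(\hat y,q)=\ell(\hat y,q)-\min_{y'\in\mathcal{O}}\ell(y',q)$ and $\delta s(\theta,q)=s(\theta,q)-\inf_{\theta'\in\mathbb{R}^p}s(\theta',q)$. Calibrated decoding: $\hat y_L(u)\in\operatorname{argmin}_{y'\in\mathcal{O}}\langle\psi(y'),Vu+b\rangle$ (any fixed tie-breaking). *)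

From Stdlib Require Import Reals ClassicalEpsilon.
From mathcomp Require Import ssreflect ssrfun ssrbool eqtype ssrnat seq choice fintype.
Set Implicit Arguments.
Unset Strict Implicit.
Unset Printing Implicit Defensive.
Open Scope R_scope.

Definition vec (p : nat) := 'I_p -> R.

Definition sumR {T : Type} (s : seq T) (f : T -> R) : R :=
  foldr (fun x acc => f x + acc) 0 s.

Definition dot {p : nat} (x y : vec p) : R := sumR (enum 'I_p) (fun i => x i * y i).
Definition vadd {p : nat} (x y : vec p) : vec p := fun i => x i + y i.
Definition vsub {p : nat} (x y : vec p) : vec p := fun i => x i - y i.
Definition matvec {p : nat} (V : 'I_p -> 'I_p -> R) (x : vec p) : vec p :=
  fun i => sumR (enum 'I_p) (fun j => V i j * x j).

Inductive ER := Fin (a : R) | PInf | MInf.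

Definition ER_le (x y : ER) : Prop :=
  match x, y with
  | MInf, _ => True
  | _, PInf => True
  | Fin a, Fin b => a <= b
  | _, _ => False
  end.
Definition ER_lt (x y : ER) : Prop := ER_le x y /\ x <> y.

(* addition; the convention PInf + MInf = PInf never matters below *)
Definition ER_plus (x y : ER) : ER :=
  match x, y with
  | Fin a, Fin b => Fin (a + b)
  | PInf, _ | _, PInf => PInf
  | _, _ => MInf
  end.
Definition ER_opp (x : ER) : ER :=
  match x with Fin a => Fin (- a) | PInf => MInf | MInf => PInf end.
Definition ER_minus (x y : ER) : ER := ER_plus x (ER_opp y).
(* scaling by a nonnegative real, with the convention 0 * (+-oo) = 0 *)
Definition ER_scale (r : R) (x : ER) : ER :=
  match x with
  | Fin a => Fin (r * a)
  | PInf => if Req_EM_T r 0 then Fin 0 else PInf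
  | MInf => if Req_EM_T r 0 then Fin 0 else MInf
  end.
Definition ER_sum {T : Type} (s : seq T) (f : T -> ER) : ER :=
  foldr (fun x acc => ER_plus (f x) acc) (Fin 0) s.

Definition is_glb (P : ER -> Prop) (z : ER) : Prop :=
  (forall w, P w -> ER_le z w) /\
  (forall z', (forall w, P w -> ER_le z' w) -> ER_le z' z).
Definition is_lub (P : ER -> Prop) (z : ER) : Prop :=
  (forall w, P w -> ER_le w z) /\
  (forall z', (forall w, P w -> ER_le w z') -> ER_le z z').
(* infimum / supremum in [-oo,+oo] (always exist; inf of empty set = +oo) *)
Definition ER_inf (P : ER -> Prop) : ER := epsilon (inhabits PInf) (is_glb P).
Definition ER_sup (P : ER -> Prop) : ER := epsilon (inhabits PInf) (is_lub P).

Definition dom {p : nat} (Om : vec p -> ER) (x : vec p) : Prop := Om x <> PInf.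

Definition proper_fun {p : nat} (Om : vec p -> ER) : Prop :=
  (forall x, Om x <> MInf) /\ (exists x, Om x <> PInf).

Definition convex_fun {p : nat} (Om : vec p -> ER) : Prop :=
  forall (x y : vec p) (t a b : R), 0 <= t <= 1 ->
    Om x = Fin a -> Om y = Fin b ->
    ER_le (Om (fun i => t * x i + (1 - t) * y i)) (Fin (t * a + (1 - t) * b)).

Definition lsc_fun {p : nat} (Om : vec p -> ER) : Prop :=
  forall (x : vec p) (r : R), ER_lt (Fin r) (Om x) ->
    exists del, 0 < del /\
      forall z : vec p, (forall i, Rabs (z i - x i) < del) -> ER_lt (Fin r) (Om z).

Definition fconj {p : nat} (Om : vec p -> ER) (th : vec p) : ER :=
  ER_sup (fun z => exists mu : vec p, z = ER_minus (Fin (dot th mu)) (Om mu)).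

Definition S_Omega {p : nat} (Om : vec p -> ER) (th mu : vec p) : ER :=
  ER_plus (ER_plus (fconj Om th) (Om mu)) (Fin (- dot th mu)).

Definition in_simplex {Y : finType} (q : Y -> R) : Prop :=
  (forall y, 0 <= q y) /\ sumR (enum Y) q = 1.

Definition mu_phi {Y : finType} {p : nat} (phi : Y -> vec p) (q : Y -> R) : vec p :=
  fun i => sumR (enum Y) (fun y => q y * phi y i).

Definition marginal_polytope {Y : finType} {p : nat} (phi : Y -> vec p) (mu : vec p) : Prop :=
  exists q : Y -> R, in_simplex q /\ mu = mu_phi phi q.

Definition ell {Y O : finType} (L : O -> Y -> R) (yh : O) (q : Y -> R) : R :=
  sumR (enum Y) (fun y => q y * L yh y).
Definition s_risk {Y : finType} {p : nat} (S : vec p -> Y -> ER) (th : vec p) (q : Y -> R) : ER :=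
  ER_sum (enum Y) (fun y => ER_scale (q y) (S th y)).

(* min over the finite set O, as an infimum *)
Definition delta_ell {Y O : finType} (L : O -> Y -> R) (yh : O) (q : Y -> R) : ER :=
  ER_minus (Fin (ell L yh q)) (ER_inf (fun z => exists y' : O, z = Fin (ell L y' q))).
Definition delta_s {Y : finType} {p : nat} (S : vec p -> Y -> ER) (th : vec p) (q : Y -> R) : ER :=
  ER_minus (s_risk S th q) (ER_inf (fun z => exists th' : vec p, z = s_risk S th' q)).

Definition calib_fn {Y O : finType} {p : nat} (S : vec p -> Y -> ER) (L : O -> Y -> R)
  (d : vec p -> O) (eps : R) : ER :=
  ER_inf (fun z => exists (th : vec p) (q : Y -> R),
            in_simplex q /\ ER_le (Fin eps) (delta_ell L (d th) q) /\ z = delta_s S th q).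

Definition calib_fn_reduced {Y O : finType} {p : nat} (phi : Y -> vec p) (psi : O -> vec p)
  (V : 'I_p -> 'I_p -> R) (b : vec p) (Om : vec p -> ER) (yhatL : vec p -> O)
  (d : vec p -> O) (eps : R) : ER :=
  ER_inf (fun z => exists th mu : vec p,
            marginal_polytope phi mu /\
            eps <= dot (vsub (psi (d th)) (psi (yhatL mu))) (vadd (matvec V mu) b) /\
            z = S_Omega Om th mu).

From Pilot Require Import Defs.
From Stdlib Require Import Reals Lra Psatz Lia.
From Stdlib Require Import Classical ClassicalEpsilon FunctionalExtensionality PropExtensionality.
From mathcomp Require Import ssreflect ssrfun ssrbool eqtype ssrnat seq choice fintype.
Open Scope R_scope.

(* Write mu := E_q phi(Y).  Since L is affine in phi(y), the expected loss is affine in mu and its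
   minimum over O is attained at yhat_L(mu), which gives the form of delta_ell.  For the surrogate,
   s(th, q) = Omega^*(th) + E_q Omega(phi(Y)) - <th, mu>, so delta_s(th, q) = S_Omega(th, mu) as
   soon as inf_th (Omega^*(th) - <th, mu>) = - Omega(mu), i.e. Omega^**(mu) = Omega(mu).  By Jensen
   Omega(mu) is finite; for r < Omega(mu), the nearest point of the closed convex epigraph to
   (mu, r) yields a separating hyperplane, i.e. an affine minorant of Omega with value r at mu.
   Nearest points exist because, by the parallelogram law, minimizing sequences are Cauchy. *)

Lemma sumR_ext {T : Type} (s : seq T) (f g : T -> R) :
  (forall x, f x = g x) -> sumR s f = sumR s g.
Proof. by move=> efg; elim: s => //= x s ->; rewrite efg. Qed.

Lemma sumR0 {T : Type} (s : seq T) : sumR s (fun=> 0) = 0.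
Proof. by elim: s => //= x s ->; rewrite Rplus_0_l. Qed.

Lemma sumR_add {T : Type} (s : seq T) (f g : T -> R) :
  sumR s (fun x => f x + g x) = sumR s f + sumR s g.
Proof. elim: s => /= [|x s ->]; lra. Qed.

Lemma sumR_sub {T : Type} (s : seq T) (f g : T -> R) :
  sumR s (fun x => f x - g x) = sumR s f - sumR s g.
Proof. elim: s => /= [|x s ->]; lra. Qed.

Lemma sumR_scal {T : Type} (s : seq T) (c : R) (f : T -> R) :
  sumR s (fun x => c * f x) = c * sumR s f.
Proof. elim: s => /= [|x s ->]; ring. Qed.

Lemma sumR_comb3 {T : Type} (s : seq T) (f g h k : T -> R) (a b c : R) :
  (forall x, f x = a * g x + b * h x + c * k x) ->
  sumR s f = a * sumR s g + b * sumR s h + c * sumR s k.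
Proof. by move=> ef; rewrite (sumR_ext _ _ _ ef) !sumR_add !sumR_scal. Qed.

Lemma ler_sumR {T : Type} (s : seq T) (f g : T -> R) :
  (forall x, f x <= g x) -> sumR s f <= sumR s g.
Proof. move=> lefg; elim: s => /= [|x s IH]; [lra | have := lefg x; lra]. Qed.

Lemma sumR_ge0 {T : Type} (s : seq T) (f : T -> R) :
  (forall x, 0 <= f x) -> 0 <= sumR s f.
Proof. by move=> f_ge0; rewrite -(sumR0 s); apply: ler_sumR. Qed.

Lemma ler_sumR_term {T : eqType} (s : seq T) (f : T -> R) (x : T) :
  (forall y, 0 <= f y) -> x \in s -> f x <= sumR s f.
Proof.
move=> f_ge0; elim: s => //= y s IH; rewrite in_cons => /orP [/eqP ->|/IH].
  by have := sumR_ge0 s f f_ge0; lra.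
by have := f_ge0 y; lra.
Qed.

Lemma sumR_swap {T U : Type} (s : seq T) (t : seq U) (f : T -> U -> R) :
  sumR s (fun x => sumR t (f x)) = sumR t (fun y => sumR s (fun x => f x y)).
Proof. elim: s => /= [|x s ->]; [by rewrite sumR0 | by rewrite -sumR_add]. Qed.

Lemma sumR_mul_eq0 {T : Type} (s : seq T) (q g : T -> R) :
  (forall y, 0 <= q y) -> sumR s q = 0 -> sumR s (fun y => q y * g y) = 0.
Proof.
move=> q_ge0; elim: s => //= y s IH sq0.
have := sumR_ge0 s q q_ge0; have := q_ge0 y => ? ?.
have -> : q y = 0 by lra.
rewrite IH; lra.
Qed.

Lemma sumR_neq0_exists {T : eqType} (s : seq T) (q : T -> R) :
  sumR s q <> 0 -> exists2 y, y \in s & q y <> 0.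
Proof.
elim: s => //= y s IH sq0; case: (Req_dec (q y) 0) => qy.
  by have [|x xs qx] := IH; [lra | exists x => //; rewrite in_cons xs orbT].
by exists y; rewrite ?mem_head.
Qed.

Lemma Un_cv_const (c : R) : Un_cv (fun=> c) c.
Proof. by move=> e e_gt0; exists 0%nat => n _; rewrite /R_dist Rminus_diag Rabs_R0. Qed.

Lemma sumR_cvg {T : Type} (s : seq T) (u : nat -> T -> R) (l : T -> R) :
  (forall x, Un_cv (fun n => u n x) (l x)) -> Un_cv (fun n => sumR s (u n)) (sumR s l).
Proof. by move=> cvu; elim: s => /= [|x s IH]; [exact: Un_cv_const | exact: CV_plus]. Qed.

Lemma eventually_inv_lt (e : R) :
  0 < e -> exists N, forall n, (n >= N)%coq_nat -> / INR n.+1 < e.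
Proof.
move=> e_gt0; have [N [ltNe N_gt0]] := archimed_cor1 e e_gt0; exists N => n leNn.
apply: Rle_lt_trans ltNe; apply: Rinv_le_contravar; first by apply: lt_0_INR; lia.
apply: le_INR; lia.
Qed.

Lemma eventually_all {T : eqType} (s : seq T) (P : T -> nat -> Prop) :
  (forall x, exists N, forall n, (n >= N)%coq_nat -> P x n) ->
  exists N, forall n, (n >= N)%coq_nat -> forall x, x \in s -> P x n.
Proof.
move=> evP; elim: s => [|y s [N IH]]; first by exists 0%nat.
have [Ny HNy] := evP y; exists (Nat.max N Ny) => n len x.
rewrite in_cons => /orP [/eqP ->|xs]; [apply: HNy | apply: IH]; by [lia|].
Qed.

Lemma ge0_of_perturbation (a b : R) :
  (forall l, 0 < l <= 1 -> 0 <= l * a + l * l * b) -> 0 <= a.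
Proof.
move=> small; apply: Rnot_lt_le => a_lt0; have absb_ge0 := Rabs_pos b.
(* Chosen so that [l * Rabs b = l * a - a], whence [l * a + l * l * Rabs b = l * l * a < 0]. *)
pose l := - a / (Rabs b - a).
have el : l * (Rabs b - a) = - a by rewrite /l; field; lra.
have l_gt0 : 0 < l by nra.
have l_le1 : l <= 1 by nra.
have := small l (conj l_gt0 l_le1).
have : l * l * b <= l * l * Rabs b by apply: Rmult_le_compat_l; [nra | exact: Rle_abs].
have : l * (l * (Rabs b - a)) = l * (- a) by rewrite el.
have ll_gt0 : 0 < l * l by nra.
have : l * (l * a) < 0 by nra.
move=> *; lra.
Qed.

Lemma real_inf_exists (P : R -> Prop) :
  (exists v, P v) -> (exists M, forall v, P v -> M <= v) ->
  exists m, (forall v, P v -> m <= v) /\ (forall e, 0 < e -> exists2 v, P v & v < m + e).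
Proof.
move=> [v0 Pv0] [M lbM].
have bnd : bound (fun u => P (- u)) by exists (- M) => u Pu; have := lbM _ Pu; lra.
have ne : exists u, P (- u) by exists (- v0); rewrite Ropp_involutive.
have [l [ubl lubl]] := completeness _ bnd ne.
exists (- l); split => [v Pv|e e_gt0].
  by have := ubl (- v); rewrite Ropp_involutive => /(_ Pv); lra.
apply: NNPP => noclose; have : l <= l - e; last lra.
apply: lubl => u Pu; apply: Rnot_lt_le => ltu; apply: noclose; exists (- u) => //; lra.
Qed.

Lemma ER_le_trans {x y z : ER} : ER_le x y -> ER_le y z -> ER_le x z.
Proof. case: x; case: y; case: z => //= *; lra. Qed.

Lemma ER_le_antisym (x y : ER) : ER_le x y -> ER_le y x -> x = y.
Proof. case: x; case: y => //= a b ? ?; f_equal; lra. Qed.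

Lemma ER_lt_gap (x : ER) (t : R) : ~ ER_le x (Fin t) -> exists r, t < r /\ ER_lt (Fin r) x.
Proof.
case: x => [a||] //= nlext.
- by exists ((t + a) / 2); split; [|split => /=; [|case]]; lra.
- by exists (t + 1); split; [lra | split].
Qed.

Lemma ER_inf_eq (P : ER -> Prop) (m : ER) : is_glb P m -> ER_inf P = m.
Proof.
move=> [lbm glbm]; have [lb glb] : is_glb P (ER_inf P).
  by apply: (epsilon_spec (inhabits PInf) (is_glb P)); exists m.
by apply: ER_le_antisym; [apply: glbm | apply: glb].
Qed.

Lemma is_glb_Fin (P : ER -> Prop) (m : R) :
  (forall w, P w -> ER_le (Fin m) w) ->
  (forall e, 0 < e -> exists2 w, P w & ER_le w (Fin (m + e))) -> is_glb P (Fin m).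
Proof.
move=> lbm approx; split => // z lbz; case: z lbz => [c||] lbz //.
- rewrite /=; apply: Rnot_lt_le => ltmc; have [|w Pw lew] := approx ((c - m) / 2); first lra.
  by have /= := ER_le_trans (lbz w Pw) lew; lra.
- by have [|w Pw lew] := approx 1; [lra | have := ER_le_trans (lbz w Pw) lew].
Qed.

Lemma ER_lub_exists (P : ER -> Prop) : exists z, Defs.is_lub P z.
Proof.
case: (classic (P PInf)) => [PPInf|nPPInf].
  by exists PInf; split => [[]|[a||] ub] //; have := ub _ PPInf.
case: (classic (exists a, P (Fin a))) => [[a0 Pa0]|nPFin]; last first.
  exists MInf; split => [w Pw|z _]; last by case: z.
  by case: w Pw => [a Pa||] //; case: nPFin; exists a.
case: (classic (exists M, forall a, P (Fin a) -> a <= M)) => [[M ubM]|unbounded].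
- have [l [ubl lubl]] := completeness (fun a => P (Fin a)) (ex_intro _ M ubM) (ex_intro _ a0 Pa0).
  exists (Fin l); split => [[a||] Pw|[b||] ub] //=; first exact: ubl.
  + by apply: lubl => a Pa; exact: (ub _ Pa).
  + by have := ub _ Pa0.
- exists PInf; split => [[]|[b||] ub] //=; last by have := ub _ Pa0.
  by case: unbounded; exists b => a Pa; exact: (ub _ Pa).
Qed.

Lemma ER_sup_spec (P : ER -> Prop) : Defs.is_lub P (ER_sup P).
Proof. exact: (epsilon_spec (inhabits PInf) (Defs.is_lub P) (ER_lub_exists P)). Qed.

Lemma ER_plus_PInf_l (x : ER) : ER_plus PInf x = PInf. Proof. by case: x. Qed.
Lemma ER_plus_PInf_r (x : ER) : ER_plus x PInf = PInf. Proof. by case: x. Qed.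

Lemma ER_sum_ext {T : Type} (s : seq T) (f g : T -> ER) :
  (forall x, f x = g x) -> ER_sum s f = ER_sum s g.
Proof. by move=> efg; elim: s => //= x s ->; rewrite efg. Qed.

Lemma ER_sum_Fin {T : Type} (s : seq T) (f : T -> R) :
  ER_sum s (fun x => Fin (f x)) = Fin (sumR s f).
Proof. by elim: s => //= x s ->. Qed.

Lemma ER_sum_PInf {T : eqType} (s : seq T) (f : T -> ER) :
  (exists2 y, y \in s & f y = PInf) -> ER_sum s f = PInf.
Proof.
elim: s => [[y]//|y s IH [x]]; rewrite in_cons => /orP [/eqP ->|xs] fx /=.
  by rewrite fx ER_plus_PInf_l.
by rewrite IH ?ER_plus_PInf_r //; exists x.
Qed.

Lemma dot_vsubl {p : nat} (x y u : vec p) : dot (vsub x y) u = dot x u - dot y u.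
Proof. by rewrite /dot -sumR_sub; apply: sumR_ext => i; rewrite /vsub; ring. Qed.

Lemma sumR_dot {Y : finType} {p : nat} (q : Y -> R) (u : vec p) (g : Y -> vec p) :
  sumR (enum Y) (fun y => q y * dot u (g y))
  = dot u (fun i => sumR (enum Y) (fun y => q y * g y i)).
Proof.
rewrite /dot (sumR_ext _ _ (fun y => sumR (enum 'I_p) (fun i => u i * (q y * g y i)))).
  by rewrite sumR_swap; apply: sumR_ext => i; rewrite sumR_scal.
by move=> y; rewrite -sumR_scal; apply: sumR_ext => i; ring.
Qed.

Definition epigraph {p : nat} (Om : vec p -> ER) (x : vec p) (t : R) : Prop :=
  ER_le (Om x) (Fin t).

Definition convex_set {p : nat} (C : vec p -> R -> Prop) : Prop :=
  forall (x y : vec p) (t s l : R), 0 <= l <= 1 -> C x t -> C y s ->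
    C (fun i => l * x i + (1 - l) * y i) (l * t + (1 - l) * s).

Definition closed_set {p : nat} (C : vec p -> R -> Prop) : Prop :=
  forall (X : nat -> vec p) (T : nat -> R) (x : vec p) (t : R),
    (forall n, C (X n) (T n)) -> (forall i, Un_cv (fun n => X n i) (x i)) -> Un_cv T t ->
    C x t.

Lemma epigraph_convex {p : nat} {Om : vec p -> ER} :
  proper_fun Om -> convex_fun Om -> convex_set (epigraph Om).
Proof.
move=> [notMInf _] cvx x y t s l l01; rewrite /epigraph.
case Ex: (Om x) => [a||] //= leat; last by case: (notMInf x).
case Ey: (Om y) => [b||] //= lebs; last by case: (notMInf y).
by apply: ER_le_trans (cvx x y l a b l01 Ex Ey) _ => /=; nra.
Qed.

Lemma epigraph_closed {p : nat} {Om : vec p -> ER} : lsc_fun Om -> closed_set (epigraph Om).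
Proof.
move=> lsc X T x t epiXT cvX cvT; apply: NNPP => /ER_lt_gap [r [ltr ltrOm]].
have [del [del_gt0 lsc_ball]] := lsc x r ltrOm.
have [N1 closeX] := eventually_all (enum 'I_p) (fun i n => Rabs (X n i - x i) < del)
  (fun i => cvX i del del_gt0).
have [N2 closeT] := cvT (r - t) ltac:(lra).
pose n := Nat.max N1 N2.
have [leOmXn neqOmXn] := lsc_ball (X n) (fun i => closeX n ltac:(lia) i (mem_enum _ i)).
have := closeT n ltac:(lia); have := epiXT n; rewrite /epigraph /R_dist.
by case: (Om (X n)) leOmXn neqOmXn => [a||] //= lera _ leaT; split_Rabs; lra.
Qed.

Lemma convex_set_sumR {p : nat} {Y : Type} {C : vec p -> R -> Prop}
    (phi : Y -> vec p) (w : Y -> R) :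
  convex_set C -> (forall y, C (phi y) (w y)) ->
  forall (s : seq Y) (q : Y -> R), (forall y, 0 <= q y) -> sumR s q = 1 ->
  C (fun i => sumR s (fun y => q y * phi y i)) (sumR s (fun y => q y * w y)).
Proof.
move=> cvx Cphi; elim=> [|y0 s IH] q q_ge0 /=; first lra.
move=> sq1; have := sumR_ge0 s q q_ge0; have := q_ge0 y0 => qy0_ge0 sq_ge0.
case: (Req_dec (q y0) 1) => qy0.
  have sq0 : sumR s q = 0 by lra.
  have -> : (fun i => q y0 * phi y0 i + sumR s (fun y => q y * phi y i)) = phi y0.
    by apply: functional_extensionality => i; rewrite sumR_mul_eq0 // qy0; ring.
  by rewrite (sumR_mul_eq0 s q w q_ge0 sq0) qy0 Rmult_1_l Rplus_0_r.
pose k := 1 - q y0; have k_gt0 : 0 < k by rewrite /k; lra.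
have sq'1 : sumR s (fun y => q y / k) = 1.
  rewrite (sumR_ext _ _ (fun y => / k * q y)) => [|y]; last by rewrite /Rdiv Rmult_comm.
  by rewrite sumR_scal (_ : sumR s q = k); [field; lra | rewrite /k; lra].
have q'_ge0 y : 0 <= q y / k.
  by apply: Rmult_le_pos; [exact: q_ge0 | apply/Rlt_le/Rinv_0_lt_compat].
have Ck := IH _ q'_ge0 sq'1.
have := cvx _ _ _ _ (q y0) (conj qy0_ge0 (ltac:(lra) : q y0 <= 1)) (Cphi y0) Ck.
have scale (f : Y -> R) :
    (1 - q y0) * sumR s (fun y => q y / k * f y) = sumR s (fun y => q y * f y).
  by rewrite -sumR_scal; apply: sumR_ext => y; rewrite /k; field; lra.
rewrite scale; congr C; apply: functional_extensionality => i; by rewrite scale.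
Qed.

Definition sqdist {p : nat} (x : vec p) (t : R) (y : vec p) (s : R) : R :=
  dot (vsub x y) (vsub x y) + (t - s) * (t - s).

Lemma sqdist_coord_le {p : nat} (x y : vec p) (t s : R) (i : 'I_p) :
  (x i - y i) * (x i - y i) <= sqdist x t y s.
Proof.
have := Rle_0_sqr (t - s); rewrite /Rsqr.
have := ler_sumR_term (enum 'I_p) (fun j => vsub x y j * vsub x y j) i
  (fun j => Rle_0_sqr _) (mem_enum _ i).
by rewrite /sqdist /dot /vsub /= => *; lra.
Qed.

Lemma sqdist_last_le {p : nat} (x y : vec p) (t s : R) : (t - s) * (t - s) <= sqdist x t y s.
Proof.
have := sumR_ge0 (enum 'I_p) (fun j => vsub x y j * vsub x y j) (fun j => Rle_0_sqr _).
by rewrite /sqdist /dot => *; lra.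
Qed.

Lemma sqdist_ge0 {p : nat} (x y : vec p) (t s : R) : 0 <= sqdist x t y s.
Proof. by have := sqdist_last_le x y t s; have := Rle_0_sqr (t - s); rewrite /Rsqr => *; lra. Qed.

Lemma sqdist_eq0 {p : nat} (x y : vec p) (t s : R) : sqdist x t y s = 0 -> x = y /\ t = s.
Proof.
move=> d0; split; last by have := sqdist_last_le x y t s; nra.
by apply: functional_extensionality => i; have := sqdist_coord_le x y t s i; nra.
Qed.

Lemma sqdist_parallelogram {p : nat} (x y z : vec p) (t s r : R) :
  sqdist x t y s = 2 * sqdist x t z r + 2 * sqdist y s z r
    - 4 * sqdist (fun i => / 2 * x i + (1 - / 2) * y i) (/ 2 * t + (1 - / 2) * s) z r.
Proof.
set m := fun i => _; rewrite /sqdist {1}/dot (sumR_comb3 _ _ (fun i => vsub x z i * vsub x z i)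
  (fun i => vsub y z i * vsub y z i) (fun i => vsub m z i * vsub m z i) 2 2 (-4)).
  by rewrite -/(dot (vsub x z) _) -/(dot (vsub y z) _) -/(dot (vsub m z) _); field.
by move=> i; rewrite /vsub /m; field.
Qed.

Lemma sqdist_segment {p : nat} (x y z : vec p) (t s r l : R) :
  sqdist (fun i => l * y i + (1 - l) * x i) (l * s + (1 - l) * t) z r
  = sqdist x t z r + 2 * l * (dot (vsub x z) (vsub y x) + (t - r) * (s - t))
    + l * l * sqdist y s x t.
Proof.
rewrite /sqdist {1}/dot (sumR_comb3 _ _ (fun i => vsub x z i * vsub x z i)
  (fun i => vsub x z i * vsub y x i) (fun i => vsub y x i * vsub y x i) 1 (2 * l) (l * l)).
  by rewrite -/(dot (vsub x z) _) -/(dot (vsub x z) (vsub y x)) -/(dot (vsub y x) _); ring.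
by move=> i; rewrite /vsub; ring.
Qed.

Lemma sqdist_cvg {p : nat} {X : nat -> vec p} {T : nat -> R} {x : vec p} {t : R}
    (z : vec p) (r : R) :
  (forall i, Un_cv (fun n => X n i) (x i)) -> Un_cv T t ->
  Un_cv (fun n => sqdist (X n) (T n) z r) (sqdist x t z r).
Proof.
move=> cvX cvT; apply: CV_plus; last by apply: CV_mult; apply: CV_minus => //; exact: Un_cv_const.
apply: (sumR_cvg _ (fun n i => vsub (X n) z i * vsub (X n) z i)) => i.
by apply: CV_mult; apply: CV_minus => //; exact: Un_cv_const.
Qed.

Lemma sqdist_cauchy_cvg {p : nat} {X : nat -> vec p} {T : nat -> R} :
  (forall e, 0 < e -> exists N, forall n m, (n >= N)%coq_nat -> (m >= N)%coq_nat ->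
     sqdist (X n) (T n) (X m) (T m) < e) ->
  exists (x : vec p) (t : R), (forall i, Un_cv (fun n => X n i) (x i)) /\ Un_cv T t.
Proof.
move=> cauchy.
have cauchy_by (f : vec p -> R -> R) :
    (forall x t y s, Rabs (f x t - f y s) * Rabs (f x t - f y s) <= sqdist x t y s) ->
    Cauchy_crit (fun n => f (X n) (T n)).
  move=> lef e e_gt0; have [N HN] := cauchy (e * e) ltac:(nra).
  exists N => n m len lem; rewrite /R_dist; have := lef (X n) (T n) (X m) (T m).
  have := HN n m len lem; have := Rabs_pos (f (X n) (T n) - f (X m) (T m)); nra.
have cvX i := R_complete _ (cauchy_by (fun x _ => x i) (fun x t y s => ltac:(
  rewrite -Rabs_mult Rabs_pos_eq; [exact: sqdist_coord_le | exact: Rle_0_sqr]))).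
have cvT := R_complete _ (cauchy_by (fun _ t => t) (fun x t y s => ltac:(
  rewrite -Rabs_mult Rabs_pos_eq; [exact: sqdist_last_le | exact: Rle_0_sqr]))).
by exists (fun i => proj1_sig (cvX i)), (proj1_sig cvT); split => [i|]; apply: proj2_sig.
Qed.

Section NearestPoint.

Context {p : nat} {C : vec p -> R -> Prop}.
Hypotheses (C_convex : convex_set C) (C_closed : closed_set C).

Lemma nearest_point_exists (z : vec p) (r : R) {x0 : vec p} {t0 : R} :
  C x0 t0 -> exists x t, C x t /\ forall y s, C y s -> sqdist x t z r <= sqdist y s z r.
Proof.
move=> Cxt0.
pose dists v := exists y s, C y s /\ v = sqdist y s z r.
have [||m [lbm approx]] := real_inf_exists dists.
- by exists (sqdist x0 t0 z r), x0, t0.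
- by exists 0 => _ [y [s [_ ->]]]; exact: sqdist_ge0.
have lbC y s : C y s -> m <= sqdist y s z r.
  by move=> Cys; apply: lbm; exists y, s.
have minseq n : exists ys : vec p * R, C ys.1 ys.2 /\ sqdist ys.1 ys.2 z r < m + / INR n.+1.
  have [|_ [y [s [Cys ->]]] close] := approx (/ INR n.+1).
    by apply/Rinv_0_lt_compat/lt_0_INR; lia.
  by exists (y, s).
have [XT XTmin] := ClassicalEpsilon.choice _ minseq.
pose X n := (XT n).1; pose T n := (XT n).2.
have CXT n : C (X n) (T n) := proj1 (XTmin n).
have closeXT n : sqdist (X n) (T n) z r < m + / INR n.+1 := proj2 (XTmin n).
have cauchy e : 0 < e -> exists N, forall n k, (n >= N)%coq_nat -> (k >= N)%coq_nat ->
    sqdist (X n) (T n) (X k) (T k) < e.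
  move=> e_gt0; have [N HN] := eventually_inv_lt (e / 4) ltac:(lra).
  have half01 : 0 <= / 2 <= 1 by lra.
  exists N => n k len lek; rewrite (sqdist_parallelogram _ _ z _ _ r).
  have := lbC _ _ (C_convex _ _ _ _ _ half01 (CXT n) (CXT k)).
  have := closeXT n; have := closeXT k; have := HN n len; have := HN k lek; move=> *; lra.
have [x [t [cvX cvT]]] := sqdist_cauchy_cvg cauchy.
have cvm : Un_cv (fun n => sqdist (X n) (T n) z r) m.
  move=> e e_gt0; have [N HN] := eventually_inv_lt e e_gt0; exists N => n len.
  have := lbC _ _ (CXT n); have := closeXT n; have := HN n len; rewrite /R_dist.
  by move=> *; split_Rabs; lra.
exists x, t; split; first exact: C_closed CXT cvX cvT.
by move=> y s Cys; rewrite (UL_sequence _ _ _ (sqdist_cvg z r cvX cvT) cvm); exact: lbC.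
Qed.

Lemma nearest_point_variational {z : vec p} {r : R} {x y : vec p} {t s : R} :
  C x t -> (forall y s, C y s -> sqdist x t z r <= sqdist y s z r) ->
  C y s -> 0 <= dot (vsub x z) (vsub y x) + (t - r) * (s - t).
Proof.
move=> Cxt xtmin Cys.
suff : 0 <= 2 * (dot (vsub x z) (vsub y x) + (t - r) * (s - t)) by lra.
apply: (ge0_of_perturbation _ (sqdist y s x t)) => l [l_gt0 l_le1].
have := xtmin _ _ (C_convex _ _ _ _ l (conj (Rlt_le _ _ l_gt0) l_le1) Cys Cxt).
by rewrite sqdist_segment; lra.
Qed.

End NearestPoint.

Lemma exists_affine_minorant {p : nat} {Om : vec p -> ER} {mu : vec p} {w0 r : R} :
  proper_fun Om -> convex_fun Om -> lsc_fun Om -> Om mu = Fin w0 -> r < w0 ->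
  exists th : vec p, forall x a, Om x = Fin a -> r + dot th x - dot th mu <= a.
Proof.
move=> proper cvx lsc Omu ltrw0.
have epi_cvx := epigraph_convex proper cvx.
have epi_mu : epigraph Om mu w0 by rewrite /epigraph Omu /=; lra.
have [x [t [epi_xt xtmin]]] := nearest_point_exists epi_cvx (epigraph_closed lsc) mu r epi_mu.
have sep y s : epigraph Om y s ->
    sqdist x t mu r <= dot (vsub x mu) (vsub y mu) + (t - r) * (s - r).
  move=> epi_ys; have := nearest_point_variational epi_cvx epi_xt xtmin epi_ys.
  have -> : dot (vsub x mu) (vsub y mu) = dot (vsub x mu) (vsub y x) + dot (vsub x mu) (vsub x mu).
    by rewrite /dot -sumR_add; apply: sumR_ext => i; rewrite /vsub; ring.
  by rewrite /sqdist => *; lra.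
have dist_gt0 : 0 < sqdist x t mu r.
  case: (Rle_lt_or_eq_dec _ _ (sqdist_ge0 x mu t r)) => // /esym/sqdist_eq0 [ex et].
  by move: epi_xt; rewrite /epigraph ex et Omu /=; lra.
have t_gt_r : 0 < t - r.
  have := sep mu w0 epi_mu.
  rewrite (_ : dot _ (vsub mu mu) = 0); first by nra.
  by rewrite /dot (sumR_ext _ _ (fun=> 0)) ?sumR0 // => i; rewrite /vsub; ring.
(* [(x - mu, t - r)] is normal to a hyperplane separating [(mu, r)] from the epigraph. *)
exists (fun i => - (x i - mu i) / (t - r)) => y a Oya.
have epi_ya : epigraph Om y a by rewrite /epigraph Oya /=; lra.
pose D := dot (vsub x mu) (vsub y mu).
have shift : dot (fun i => - (x i - mu i) / (t - r)) y - dot (fun i => - (x i - mu i) / (t - r)) mu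
    = - / (t - r) * D.
  by rewrite /D /dot -sumR_sub -sumR_scal; apply: sumR_ext => i; rewrite /vsub; field; lra.
have := sep y a epi_ya; rewrite -/D => sepD.
have : 0 <= / (t - r) * (D + (t - r) * (a - r)).
  by apply: Rmult_le_pos; [apply/Rlt_le/Rinv_0_lt_compat | lra].
have : / (t - r) * (D + (t - r) * (a - r)) = / (t - r) * D + (a - r) by field; lra.
by move=> *; lra.
Qed.

Lemma fconj_ge {p : nat} {Om : vec p -> ER} {x : vec p} {a : R} (th : vec p) :
  Om x = Fin a -> ER_le (Fin (dot th x - a)) (fconj Om th).
Proof. by move=> Oxa; apply: (proj1 (ER_sup_spec _)); exists x; rewrite Oxa. Qed.

Lemma fconj_le {p : nat} (Om : vec p -> ER) (th : vec p) (M : R) : proper_fun Om ->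
  (forall x a, Om x = Fin a -> dot th x - a <= M) -> ER_le (fconj Om th) (Fin M).
Proof.
move=> [notMInf _] leM; apply: (proj2 (ER_sup_spec _)) => _ [x ->].
by case Ox: (Om x) => [a||] /=; [exact: leM | | case: (notMInf x)].
Qed.

Lemma fconj_neq_MInf {p : nat} {Om : vec p -> ER} (th : vec p) :
  proper_fun Om -> fconj Om th <> MInf.
Proof.
move=> [notMInf [x0]]; case Ox0: (Om x0) => [a||] // _; last by case: (notMInf x0).
by move=> fMInf; have := fconj_ge th Ox0; rewrite fMInf.
Qed.

Lemma exists_fconj_le {p : nat} {Om : vec p -> ER} {mu : vec p} {w0 r : R} :
  proper_fun Om -> convex_fun Om -> lsc_fun Om -> Om mu = Fin w0 -> r < w0 ->
  exists th, ER_le (fconj Om th) (Fin (dot th mu - r)).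
Proof.
move=> proper cvx lsc Omu ltrw0.
have [th minor] := exists_affine_minorant proper cvx lsc Omu ltrw0.
by exists th; apply: fconj_le => // x a Oxa; have := minor x a Oxa; lra.
Qed.

Section SurrogateRisk.

Context {Y : finType} {p : nat} {Om : vec p -> ER} {phi : Y -> vec p} {w : Y -> R}.
Hypotheses (proper : proper_fun Om) (cvx : convex_fun Om) (lsc : lsc_fun Om).
Hypothesis Om_phi : forall y, Om (phi y) = Fin (w y).

Let S th y := S_Omega Om th (phi y).
Let Ew q := sumR (enum Y) (fun y => q y * w y).

Lemma s_risk_Fin (th : vec p) {q : Y -> R} {a : R} :
  sumR (enum Y) q = 1 -> fconj Om th = Fin a ->
  s_risk S th q = Fin (a + Ew q - dot th (mu_phi phi q)).
Proof.
move=> sq1 fa; rewrite /s_risk (ER_sum_ext _ _ (fun y => Fin (q y * (a + w y - dot th (phi y))))).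
  rewrite ER_sum_Fin; congr Fin.
  rewrite (sumR_ext _ _ (fun y => (a * q y + q y * w y) - q y * dot th (phi y))) => [|y]; last ring.
  by rewrite sumR_sub sumR_add sumR_scal sq1 sumR_dot /Ew /mu_phi; ring.
by move=> y; rewrite /S /S_Omega fa Om_phi /=; congr Fin; ring.
Qed.

Lemma s_risk_PInf (th : vec p) {q : Y -> R} :
  sumR (enum Y) q = 1 -> fconj Om th = PInf -> s_risk S th q = PInf.
Proof.
(* [ER_scale 0 PInf = Fin 0], so a point of positive mass is needed. *)
move=> sq1 fPInf; have [|y _ qy] := sumR_neq0_exists (enum Y) q.
  by rewrite sq1; exact: R1_neq_R0.
apply: ER_sum_PInf; exists y; first by rewrite mem_enum.
by rewrite /S /S_Omega fPInf !ER_plus_PInf_l /=; case: Req_EM_T.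
Qed.

Lemma Om_mu_phi_Fin {q : Y -> R} : in_simplex q -> exists w0, Om (mu_phi phi q) = Fin w0.
Proof.
move=> [q_ge0 sq1].
have epi_phi y : epigraph Om (phi y) (w y) by rewrite /epigraph Om_phi /=; lra.
have := convex_set_sumR phi w (epigraph_convex proper cvx) epi_phi (enum Y) q q_ge0 sq1.
rewrite /epigraph -/(mu_phi phi q).
by case: (Om (mu_phi phi q)) (proj1 proper (mu_phi phi q)) => [a||] //; exists a.
Qed.

Lemma inf_s_risk {q : Y -> R} {w0 : R} : in_simplex q -> Om (mu_phi phi q) = Fin w0 ->
  ER_inf (fun z => exists th, z = s_risk S th q) = Fin (Ew q - w0).
Proof.
move=> [q_ge0 sq1] Omu; apply: ER_inf_eq; apply: is_glb_Fin => [_ [th ->]|e e_gt0].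
  case fth: (fconj Om th) (fconj_neq_MInf th proper) => [a||] // _.
    rewrite (s_risk_Fin th sq1 fth) /=.
    by have := fconj_ge th Omu; rewrite fth /=; lra.
  by rewrite s_risk_PInf.
have [th leth] := exists_fconj_le proper cvx lsc Omu (ltac:(lra) : w0 - e < w0).
exists (s_risk S th q); first by exists th.
case fth: (fconj Om th) (fconj_neq_MInf th proper) leth => [a||] //= _ lea.
by rewrite (s_risk_Fin th sq1 fth) /=; lra.
Qed.

Lemma delta_s_S_Omega (th : vec p) {q : Y -> R} :
  in_simplex q -> delta_s S th q = S_Omega Om th (mu_phi phi q).
Proof.
move=> qsimplex; have [w0 Omu] := Om_mu_phi_Fin qsimplex.
rewrite /delta_s (inf_s_risk qsimplex Omu) /S_Omega Omu.
case fth: (fconj Om th) (fconj_neq_MInf th proper) => [a||] // _.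
  by rewrite (s_risk_Fin th (proj2 qsimplex) fth) /=; congr Fin; ring.
by rewrite (s_risk_PInf th (proj2 qsimplex) fth).
Qed.

End SurrogateRisk.

Section TaskLoss.

Context {Y O : finType} {p : nat} {phi : Y -> vec p} {psi : O -> vec p} {L : O -> Y -> R}.
Context {V : 'I_p -> 'I_p -> R} {b : vec p} {c : Y -> R}.
Hypothesis L_affine : forall yh y, L yh y = dot (psi yh) (vadd (matvec V (phi y)) b) + c y.

Lemma ell_mu_phi (yh : O) (q : Y -> R) : sumR (enum Y) q = 1 ->
  ell L yh q
  = dot (psi yh) (vadd (matvec V (mu_phi phi q)) b) + sumR (enum Y) (fun y => q y * c y).
Proof.
move=> sq1; rewrite /ell (sumR_ext _ _ (fun y =>
    q y * dot (psi yh) (vadd (matvec V (phi y)) b) + q y * c y)) => [|y]; last first.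
  by rewrite L_affine; ring.
rewrite sumR_add sumR_dot; congr (dot _ _ + _); apply: functional_extensionality => i.
rewrite /vadd (sumR_ext _ _ (fun y => q y * matvec V (phi y) i + b i * q y)) => [|y]; last ring.
by rewrite sumR_add sumR_scal sq1 Rmult_1_r [X in X + _]sumR_dot.
Qed.

Context {yhatL : vec p -> O}.
Hypothesis yhatL_min : forall u y', dot (psi (yhatL u)) (vadd (matvec V u) b)
                                    <= dot (psi y') (vadd (matvec V u) b).

Lemma delta_ell_mu_phi (yh : O) (q : Y -> R) : in_simplex q ->
  delta_ell L yh q
  = Fin (dot (vsub (psi yh) (psi (yhatL (mu_phi phi q)))) (vadd (matvec V (mu_phi phi q)) b)).
Proof.
move=> [_ sq1]; set yq := yhatL (mu_phi phi q).
rewrite /delta_ell (ER_inf_eq _ (Fin (ell L yq q))).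
  by rewrite /ER_minus /= !ell_mu_phi // dot_vsubl; congr Fin; ring.
split => [_ [y' ->]|z' lbz']; last by apply: lbz'; exists yq.
by rewrite /= !ell_mu_phi //; have := yhatL_min (mu_phi phi q) y'; rewrite -/yq => *; lra.
Qed.

End TaskLoss.

Theorem mainTheorem6 (Y O : finType) (p : nat)
  (phi : Y -> vec p) (psi : O -> vec p) (L : O -> Y -> R)
  (V : 'I_p -> 'I_p -> R) (b : vec p) (c : Y -> R)
  (HLnn : forall (yh : O) (y : Y), 0 <= L yh y)
  (HL : forall (yh : O) (y : Y),
      L yh y = dot (psi yh) (vadd (matvec V (phi y)) b) + c y)
  (Om : vec p -> ER)
  (Hproper : proper_fun Om) (Hconv : convex_fun Om) (Hlsc : lsc_fun Om)
  (Hdom : forall y : Y, dom Om (phi y))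
  (yhatL : vec p -> O)
  (HyhatL : forall (u : vec p) (y' : O),
      dot (psi (yhatL u)) (vadd (matvec V u) b) <= dot (psi y') (vadd (matvec V u) b))
  (d : vec p -> O) (eps : R) (Heps : 0 <= eps) :
  calib_fn (fun th y => S_Omega Om th (phi y)) L d eps
  = calib_fn_reduced phi psi V b Om yhatL d eps.
Proof.
have [w Om_phi] : exists w : Y -> R, forall y, Om (phi y) = Fin (w y).
  apply: (ClassicalEpsilon.choice (fun y a => Om (phi y) = Fin a)) => y.
  by case Oy: (Om (phi y)) => [a||]; [exists a | case: (Hdom y) | case: (proj1 Hproper (phi y))].
have delta_s_eq := delta_s_S_Omega Hproper Hconv Hlsc Om_phi.
have delta_ell_eq := delta_ell_mu_phi HL HyhatL.
rewrite /calib_fn /calib_fn_reduced; congr ER_inf.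
apply: functional_extensionality => z; apply: propositional_extensionality; split.
- move=> [th [q [qs [eps_le ->]]]]; rewrite delta_ell_eq // in eps_le.
  by exists th, (mu_phi phi q); split; [exists q | rewrite delta_s_eq].
- move=> [th [_ [[q [qs ->]] [eps_le ->]]]].
  by exists th, q; rewrite delta_ell_eq // delta_s_eq.
Qed.
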